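(* Let $\{\psi_j\}_{j=1}^N$ be an orthonormal system in $\ell^2(\mathbb Z)$. Then $$\sum_{n\in\mathbb Z}\Big(\sum_{j=1}^N|\psi_j(n)|^2\Big)^3\le\sum_{j=1}^N\sum_{n\in\mathbb Z}|D\psi_j(n)|^2,$$ where $D\psi(n)=\psi(n+1)-\psi(n)$. *)

From HB Require Import structures.
From mathcomp Require Import all_boot all_order all_algebra.
From mathcomp Require Import all_classical all_reals all_analysis.
From mathcomp Require Import complex.
Set Implicit Arguments. Unset Strict Implicit. Unset Printing Implicit Defensive.
Import Order.TTheory GRing.Theory Num.Theory numFieldNormedType.Exports.
Local Open Scope ring_scope.
Local Open Scope classical_set_scope.

Definition sqmod (R : realType) (z : R[i]) : R :=
  (complex.Re z) ^+ 2 + (complex.Im z) ^+ 2.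

(* symmetric partial sums  \sum_{n=-M}^{M} f n  over the integers *)
Definition zpsum (R : realType) (f : int -> R) (M : nat) : R :=
  \sum_(0 <= i < (M.*2).+1) f (i%:Z - M%:Z).

Definition in_l2 (R : realType) (f : int -> R[i]) : Prop :=
  (\esum_(n in [set: int]) ((sqmod (f n))%:E) < +oo)%E.

(* complex inner product <f, g> = sum_n f(n) conj(g(n)) equals the complex
   number c; for f, g in l^2 the series converges absolutely, we take the
   limit of symmetric partial sums of real and imaginary parts. *)
Definition inner_is (R : realType) (f g : int -> R[i]) (c : R[i]) : Prop :=
  (zpsum (fun n => complex.Re (f n * (g n)^*)%C) @ \oo --> (complex.Re c : R)) /\
  (zpsum (fun n => complex.Im (f n * (g n)^*)%C) @ \oo --> (complex.Im c : R)).

Definition orthonormal_l2Z (R : realType) (N : nat) (psi : 'I_N -> int -> R[i]) : Prop :=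
  (forall j, in_l2 (psi j)) /\
  (forall j k, inner_is (psi j) (psi k) (if j == k then 1 else 0)).

Definition Dz (R : realType) (f : int -> R[i]) (n : int) : R[i] := f (n + 1) - f n.

(* Write P(n, m) = sum_j conj(psi_j n) psi_j m for the kernel of the orthogonal
   projection onto the span of the psi_j, and rho(n) = sum_j |psi_j n|^2.  Bessel's
   inequality gives sum_m |P(n, m)|^2 <= rho(n), while |P(n, n)|^2 = rho(n)^2.
   A function phi on Z with ||phi||^2 <= r and |phi(n)|^2 = r^2 must drop to
   |phi|^2 <= r/K within K steps on each side of n; telescoping |phi|^2 over that
   window and Cauchy-Schwarz give r^3 <= sum_{|m - n| <= K} |D phi(m)|^2 + 2/K.
   Take phi = P(n, .) and sum over n: by Bessel's inequality again, now for the
   coefficients D psi_j(m), sum_n |sum_j conj(psi_j n) D psi_j(m)|^2 is at most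
   sum_j |D psi_j(m)|^2, and K -> oo gives the claim. *)

From HB Require Import structures.
From mathcomp Require Import all_boot all_order all_algebra.
From mathcomp Require Import all_classical all_reals all_analysis.
From mathcomp Require Import complex.
From mathcomp Require Import ring lra zify.
Import Order.TTheory GRing.Theory Num.Theory numFieldNormedType.Exports.
Local Open Scope ring_scope.
Local Open Scope classical_set_scope.

Section ComplexModulus.
Variable R : realType.
Implicit Types (z w : R[i]) (t : R).

Lemma sqmod_ge0 z : 0 <= sqmod z.
Proof. by rewrite addr_ge0 ?sqr_ge0. Qed.

Lemma sqmodN z : sqmod (- z) = sqmod z.
Proof. by case: z => a b; rewrite /sqmod /= !sqrrN. Qed.

Lemma sqmodJ z : sqmod z^*%C = sqmod z.
Proof. by case: z => a b; rewrite /sqmod /= sqrrN. Qed.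

Lemma sqmod_real t : sqmod t%:C%C = t ^+ 2.
Proof. by rewrite /sqmod /= expr0n addr0. Qed.

Lemma mulJc_sqmod z : (z^* * z = (sqmod z)%:C)%C.
Proof.
case: z => a b; apply/eqP; rewrite eq_complex /sqmod /=.
by apply/andP; split; apply/eqP; ring.
Qed.

Lemma sqmodE z : sqmod z = complex.Re (z * z^*%C).
Proof. by rewrite mulrC mulJc_sqmod. Qed.

Lemma Re_mul z w :
  complex.Re (z * w) = complex.Re z * complex.Re w - complex.Im z * complex.Im w.
Proof. by case: z; case: w. Qed.

Lemma sqmodD_le z w : sqmod (z + w) <= 2 * (sqmod z + sqmod w).
Proof.
case: z => a b; case: w => c d; rewrite /sqmod /=.
by have := sqr_ge0 (a - c); have := sqr_ge0 (b - d); nra.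
Qed.

Lemma sqmodB_sqmod z w : sqmod z - sqmod w = complex.Re ((z - w) * (z + w)^*%C).
Proof. by case: z => a b; case: w => c d; rewrite /sqmod /=; ring. Qed.

Lemma sqmod_scaleB t z w :
  sqmod (t%:C%C * z - w) = sqmod z * t ^+ 2 - 2 * complex.Re (z * w^*%C) * t + sqmod w.
Proof. by case: z => a b; case: w => c d; rewrite /sqmod /=; ring. Qed.

End ComplexModulus.

Lemma quadratic_ge0_discr {F : realFieldType} (a b c : F) :
  0 <= a -> (forall t, 0 <= a * t ^+ 2 + b * t + c) -> b ^+ 2 <= 4 * a * c.
Proof.
move=> a_ge0 q_ge0; pose p := a *: 'X^2 + b *: 'X + c%:P.
have size_p : (size p <= 3)%N.
  rewrite /p -addrA (leq_trans (size_polyD _ _)) // geq_max.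
  rewrite (leq_trans (size_scale_leq _ _)) ?size_polyXn //.
  rewrite (leq_trans (size_polyD _ _)) // geq_max size_polyC.
  by rewrite (leq_trans (size_scale_leq _ _)) ?size_polyX //; case: (c == 0).
have := deg_le2_poly_delta_ge0 size_p.
rewrite /p !coefD !coefZ !coefXn !coefX !coefC /= !(mulr0, mulr1, add0r, addr0).
rewrite subr_le0; apply => // t.
by rewrite !hornerE; have := q_ge0 t; rewrite expr2 mulrA.
Qed.

Lemma cauchy_schwarz_Re {R : realType} {I : Type} (r : seq I) (x y : I -> R[i]) :
  (\sum_(i <- r) complex.Re (x i * (y i)^*%C)) ^+ 2 <=
  (\sum_(i <- r) sqmod (x i)) * \sum_(i <- r) sqmod (y i).
Proof.
set Q := \sum_(i <- r) _; set P := \sum_(i <- r) _; set S := \sum_(i <- r) _.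
suff : (- (2 * Q)) ^+ 2 <= 4 * P * S by nra.
apply: quadratic_ge0_discr => [|t]; first by apply: sumr_ge0 => i _; exact: sqmod_ge0.
have -> : P * t ^+ 2 + - (2 * Q) * t + S = \sum_(i <- r) sqmod (t%:C%C * x i - y i).
  under eq_bigr do rewrite sqmod_scaleB.
  by rewrite big_split sumrB /= -!mulr_suml -mulr_sumr mulNr.
by apply: sumr_ge0 => i _; exact: sqmod_ge0.
Qed.

Lemma ler_sum_subset {I : eqType} {F : numDomainType} (s t : seq I) (f : I -> F) :
  uniq s -> uniq t -> {subset s <= t} -> (forall i, 0 <= f i) ->
  \sum_(i <- s) f i <= \sum_(i <- t) f i.
Proof.
move=> s_uniq t_uniq s_t f_ge0.
rewrite [leRHS](bigID (mem s)) /=.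
have -> : \sum_(i <- t | i \in s) f i = \sum_(i <- s) f i.
  rewrite -big_filter; apply/perm_big/uniq_perm; rewrite ?filter_uniq // => i.
  by rewrite mem_filter andb_idr //; apply: s_t.
by rewrite lerDl sumr_ge0.
Qed.

Definition zwindow (a : int) (L : nat) : seq int := [seq a + i%:Z | i <- iota 0 L].

Definition zball (n : int) (K : nat) : seq int := zwindow (n - K%:Z) K.*2.+1.

Lemma zwindow_uniq a L : uniq (zwindow a L).
Proof. by rewrite map_inj_uniq ?iota_uniq // => i j /addrI; case. Qed.

Lemma mem_zwindow a L m : (m \in zwindow a L) = (a <= m < a + L%:Z).
Proof.
apply/mapP/andP => [[k] | [am mL]].
  by rewrite mem_iota add0n => /andP[_ kL] ->; split; lia.
by exists `|m - a|%N; [rewrite mem_iota /=; lia | rewrite gez0_abs; lia].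
Qed.

Lemma big_zwindow {T : Type} (idx : T) (op : T -> T -> T) a L (F : int -> T) :
  \big[op/idx]_(m <- zwindow a L) F m = \big[op/idx]_(0 <= i < L) F (a + i%:Z).
Proof. by rewrite big_map /index_iota subn0. Qed.

Lemma zwindow_subset a L b K :
  b <= a -> a + L%:Z <= b + K%:Z -> {subset zwindow a L <= zwindow b K}.
Proof. by move=> ba LK m; rewrite !mem_zwindow => /andP[? ?]; apply/andP; split; lia. Qed.

Lemma zball_center n K : n \in zball n K.
Proof. rewrite mem_zwindow; apply/andP; split; lia. Qed.

Lemma zball_subset_sum_absz {s : seq int} {n} K : uniq s -> n \in s ->
  {subset zball n K <= zball 0 (\sum_(x <- s) `|x| + K)}.
Proof.
move=> s_uniq ns; have : (`|n| <= \sum_(x <- s) `|x|)%N.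
  by rewrite (bigD1_seq n) //= leq_addr.
by move=> n_le; apply: zwindow_subset; lia.
Qed.

Lemma zpsum_zball {R : realType} (f : int -> R) M :
  zpsum f M = \sum_(m <- zball 0 M) f m.
Proof. by rewrite big_zwindow; apply: eq_bigr => i _; rewrite add0r addrC. Qed.

Lemma nondecreasing_zpsum {R : realType} (f : int -> R) :
  (forall m, 0 <= f m) -> nondecreasing_seq (zpsum f).
Proof.
move=> f_ge0 M M' MM'; rewrite !zpsum_zball.
by apply: ler_sum_subset; rewrite ?zwindow_uniq //; apply: zwindow_subset; lia.
Qed.

Section Bessel.
Context {R : realType} {N : nat} {psi : 'I_N -> int -> R[i]}.
Hypothesis psi_on : orthonormal_l2Z psi.

Lemma sqmod_lincomb (c : 'I_N -> R[i]) m :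
  sqmod (\sum_(j < N) c j * psi j m) = \sum_(j < N) \sum_(k < N)
    (complex.Re (c j * (c k)^*%C) * complex.Re (psi j m * (psi k m)^*%C) -
     complex.Im (c j * (c k)^*%C) * complex.Im (psi j m * (psi k m)^*%C)).
Proof.
rewrite sqmodE rmorph_sum mulr_suml raddf_sum; apply: eq_bigr => j _.
rewrite mulr_sumr raddf_sum; apply: eq_bigr => k _.
by rewrite rmorphM mulrACA [LHS]Re_mul.
Qed.

Lemma cvg_zpsum_sqmod_lincomb (c : 'I_N -> R[i]) :
  zpsum (fun m => sqmod (\sum_(j < N) c j * psi j m)) @ \oo -->
  \sum_(j < N) sqmod (c j).
Proof.
have [_ psi_inner] := psi_on.
pose delta (j k : 'I_N) : R[i] := if j == k then 1 else 0.
have -> : \sum_(j < N) sqmod (c j) = \sum_(j < N) \sum_(k < N)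
    (complex.Re (c j * (c k)^*%C) * complex.Re (delta j k) -
     complex.Im (c j * (c k)^*%C) * complex.Im (delta j k)).
  apply: eq_bigr => j _; rewrite (bigD1 j) //= big1 => [|k /negbTE].
    by rewrite /delta eqxx mulr1 mulr0 subr0 addr0 sqmodE.
  by rewrite /delta eq_sym => ->; rewrite !mulr0 subr0.
have -> : zpsum (fun m => sqmod (\sum_(j < N) c j * psi j m)) = fun M =>
    \sum_(j < N) \sum_(k < N)
    (complex.Re (c j * (c k)^*%C) *
       zpsum (fun m => complex.Re (psi j m * (psi k m)^*%C)) M -
     complex.Im (c j * (c k)^*%C) *
       zpsum (fun m => complex.Im (psi j m * (psi k m)^*%C)) M).
  apply/funext => M; rewrite /zpsum.
  under eq_bigr do rewrite sqmod_lincomb.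
  rewrite exchange_big; apply: eq_bigr => j _.
  rewrite exchange_big; apply: eq_bigr => k _.
  by rewrite sumrB -!mulr_sumr.
apply: (cvg_big add_continuous) => // j _.
apply: (cvg_big add_continuous) => // k _.
have [Re_cvg Im_cvg] := psi_inner j k.
by apply: cvgB; apply: cvgMl_tmp.
Qed.

Lemma bessel_ineq (c : 'I_N -> R[i]) (s : seq int) : uniq s ->
  \sum_(m <- s) sqmod (\sum_(j < N) c j * psi j m) <= \sum_(j < N) sqmod (c j).
Proof.
move=> s_uniq; have u_cvg := cvg_zpsum_sqmod_lincomb c.
rewrite -(cvg_lim _ u_cvg) //.
apply: le_trans (nondecreasing_cvgn_le _ _ (\sum_(x <- s) `|x| + 0)%N).
- rewrite zpsum_zball; apply: ler_sum_subset; rewrite ?zwindow_uniq //.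
    by move=> m ms; exact: zball_subset_sum_absz 0 s_uniq ms _ (zball_center m 0).
  by move=> m; apply: sqmod_ge0.
- by apply: nondecreasing_zpsum => m; apply: sqmod_ge0.
- by apply/cvg_ex; eexists; apply: u_cvg.
Qed.

Lemma bessel_ineq_dual (d : 'I_N -> R[i]) (s : seq int) : uniq s ->
  \sum_(n <- s) sqmod (\sum_(j < N) (psi j n)^*%C * d j) <= \sum_(j < N) sqmod (d j).
Proof.
move=> s_uniq; under eq_bigr => n _.
  rewrite -sqmodJ rmorph_sum; under eq_bigr do rewrite rmorphM /= conjcK mulrC.
  over.
apply: le_trans (bessel_ineq _ _ s_uniq) _.
by under eq_bigr do rewrite sqmodJ.
Qed.

End Bessel.

Lemma exists_le_mean {F : realDomainType} {K : nat} (f : nat -> F) : (0 < K)%N ->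
  exists2 i, (i < K)%N & K%:R * f i <= \sum_(0 <= j < K) f j.
Proof.
case: K => // K _.
have [i _ i_min] := @arg_minP _ _ 'I_K.+1 ord0 xpredT (fun j : 'I_K.+1 => f j) isT.
exists i => //; rewrite big_mkord mulr_natl.
rewrite -[in X in f i *+ X](card_ord K.+1) -sumr_const.
by apply: ler_sum => j _; apply: i_min.
Qed.

(* The signs make the sum telescope from both ends towards the peak [f p]. *)
Lemma peak_cauchy_schwarz {R : realType} (f : nat -> R[i]) (p q : nat) :
  (2 * sqmod (f p) - sqmod (f 0%N) - sqmod (f (p + q)%N)) ^+ 2 <=
  (\sum_(0 <= j < p + q) sqmod (f j.+1 - f j)) *
  \sum_(0 <= j < p + q) sqmod (f j.+1 + f j).
Proof.
pose y j := if (j < p)%N then f j.+1 + f j else - (f j.+1 + f j).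
have -> : \sum_(0 <= j < p + q) sqmod (f j.+1 + f j) =
          \sum_(0 <= j < p + q) sqmod (y j).
  by apply: eq_bigr => j _; rewrite /y; case: ifP; rewrite ?sqmodN.
suff -> : 2 * sqmod (f p) - sqmod (f 0%N) - sqmod (f (p + q)%N) =
          \sum_(0 <= j < p + q) complex.Re ((f j.+1 - f j) * (y j)^*%C).
  exact: cauchy_schwarz_Re.
rewrite (big_cat_nat (leq0n p) (leq_addr q p)) /=.
rewrite (@eq_big_nat _ _ _ 0 p _ (fun j => sqmod (f j.+1) - sqmod (f j))); last first.
  by move=> j /andP[_ jp]; rewrite /y jp sqmodB_sqmod.
rewrite (@eq_big_nat _ _ _ p (p + q) _ (fun j => - (sqmod (f j.+1) - sqmod (f j))));
  last by move=> j /andP[pj _]; rewrite /y ltnNge pj /= rmorphN mulrN raddfN sqmodB_sqmod.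
by rewrite sumrN !telescope_sumr ?leq_addr //; ring.
Qed.

Lemma cube_le_of_sqr_le {F : realFieldType} (r k SD X : F) :
  0 <= r <= 1 -> 0 < k -> 0 <= SD -> 2 * r * (r - k) <= X -> X ^+ 2 <= 4 * r * SD ->
  r ^+ 3 <= SD + 2 * k.
Proof.
move=> /andP[r_ge0 r_le1] k_gt0 SD_ge0 X_ge X_le.
have r2_le1 : r ^+ 2 <= 1 by rewrite expr2; nra.
have [r_le_k | k_lt_r] := lerP r k.
  have : r ^+ 3 <= r by rewrite exprS -[leRHS]mulr1 ler_wpM2l.
  lra.
have r_gt0 : 0 < r by lra.
have : (2 * r * (r - k)) ^+ 2 <= 4 * r * SD.
  by apply: le_trans X_le; rewrite ler_pXn2r // ?nnegrE; nra.
have -> : (2 * r * (r - k)) ^+ 2 = 4 * r * (r * (r - k) ^+ 2) by ring.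
by rewrite ler_pM2l ?mulr_gt0 //; nra.
Qed.

Lemma peak_le_energy {R : realType} {f : nat -> R[i]} {r k : R} {p q : nat} :
  0 < k -> (forall L, \sum_(0 <= j < L) sqmod (f j) <= r) ->
  sqmod (f p) = r ^+ 2 -> sqmod (f 0%N) <= r * k -> sqmod (f (p + q)%N) <= r * k ->
  r ^+ 3 <= \sum_(0 <= j < p + q) sqmod (f j.+1 - f j) + 2 * k.
Proof.
move=> k_gt0 f_bound f_peak f0_small fpq_small.
have sum_ge0 L (g : nat -> R) : (forall j, 0 <= g j) -> 0 <= \sum_(0 <= j < L) g j.
  by move=> g_ge0; apply: sumr_ge0 => j _.
have r_ge0 : 0 <= r by apply: le_trans (f_bound 0%N); rewrite big_geq.
have r_le1 : r <= 1.
  have : sqmod (f p) <= r.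
    apply: le_trans (f_bound p.+1); rewrite big_nat_recr //= lerDr.
    by apply: sum_ge0 => j; apply: sqmod_ge0.
  by rewrite f_peak => r2_le; nra.
have shifted_bound : \sum_(0 <= j < p + q) sqmod (f j.+1) <= r.
  apply: le_trans (f_bound (p + q).+1); rewrite big_nat_recl //= lerDr.
  exact: sqmod_ge0.
have sum_le : \sum_(0 <= j < p + q) sqmod (f j.+1 + f j) <= 4 * r.
  apply: (@le_trans _ _ (\sum_(0 <= j < p + q) 2 * (sqmod (f j.+1) + sqmod (f j)))).
    by apply: ler_sum => j _; apply: sqmodD_le.
  by rewrite -mulr_sumr big_split /=; have := f_bound (p + q)%N; lra.
apply: (@cube_le_of_sqr_le _ r k _
  (2 * sqmod (f p) - sqmod (f 0%N) - sqmod (f (p + q)%N))).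
- by rewrite r_ge0 r_le1.
- exact: k_gt0.
- by apply: sum_ge0 => j; apply: sqmod_ge0.
- by rewrite f_peak; lra.
- apply: le_trans (peak_cauchy_schwarz f p q) _.
  by rewrite mulrC ler_wpM2r // ?sum_ge0 // => j; apply: sqmod_ge0.
Qed.

Lemma peak_le_local_energy {R : realType} {phi : int -> R[i]} {r : R} {n : int}
    {K : nat} :
  (0 < K)%N -> (forall s, uniq s -> \sum_(m <- s) sqmod (phi m) <= r) ->
  sqmod (phi n) = r ^+ 2 ->
  r ^+ 3 <= \sum_(m <- zball n K) sqmod (Dz phi m) + 2 / K%:R.
Proof.
move=> K_gt0 phi_bound phi_peak.
have window_bound a L : \sum_(0 <= j < L) sqmod (phi (a + j%:Z)) <= r.
  by rewrite -(big_zwindow _ _ _ _ (fun m => sqmod (phi m))) phi_bound ?zwindow_uniq.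
have K_pos : 0 < K%:R :> R by rewrite ltr0n.
have small x : K%:R * sqmod x <= r -> sqmod x <= r * K%:R^-1.
  by rewrite ler_pdivlMr // mulrC.
have [i iK left_small] :=
  exists_le_mean (fun j => sqmod (phi (n - K%:Z + j%:Z))) K_gt0.
have [i' i'K right_small] :=
  exists_le_mean (fun j => sqmod (phi (n + 1 + j%:Z))) K_gt0.
set a := n - K%:Z + i%:Z; pose f j := phi (a + j%:Z).
have f_peak : sqmod (f (K - i)%N) = r ^+ 2.
  by rewrite /f (_ : a + _ = n) //; rewrite /a; lia.
have f0_small : sqmod (f 0%N) <= r * K%:R^-1.
  by rewrite /f addr0; apply/small/(le_trans left_small).
have fpq_small : sqmod (f (K - i + i'.+1)%N) <= r * K%:R^-1.
  rewrite /f (_ : a + _ = n + 1 + i'%:Z); last by rewrite /a; lia.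
  exact/small/(le_trans right_small).
have k_gt0 : 0 < K%:R^-1 :> R by rewrite invr_gt0.
apply: le_trans (peak_le_energy k_gt0 (window_bound a) f_peak f0_small fpq_small) _.
rewrite lerD2r.
have -> : \sum_(0 <= j < K - i + i'.+1) sqmod (f j.+1 - f j) =
          \sum_(m <- zwindow a (K - i + i'.+1)) sqmod (Dz phi m).
  rewrite big_zwindow; apply: eq_bigr => j _.
  by rewrite /f /Dz; congr (sqmod (phi _ - _)); lia.
apply: ler_sum_subset; rewrite ?zwindow_uniq //.
- by apply: zwindow_subset; rewrite /a; lia.
- by move=> m; apply: sqmod_ge0.
Qed.

Lemma lee_of_le_add_inv_nat {R : realType} (x c : R) (y : \bar R) :
  (forall K, (0 < K)%N -> ((x - c / K%:R)%:E <= y)%E) -> (x%:E <= y)%E.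
Proof.
move=> x_le; apply/lee_addgt0Pr => e e_gt0.
pose K := (Num.truncn (c / e)).+1.
have K_pos : 0 < K%:R :> R by rewrite ltr0n.
have c_lt : c < K%:R * e by rewrite -ltr_pdivrMr // truncnS_gt.
apply: le_trans (leeD (x_le K isT) (lexx e%:E)).
by rewrite -EFinD lee_fin -lerBlDl opprB addrC subrK ler_pdivrMr // mulrC ltW.
Qed.

Section DensityBound.
Context {R : realType} {N : nat} {psi : 'I_N -> int -> R[i]}.
Hypothesis psi_on : orthonormal_l2Z psi.

Definition density (n : int) : R := \sum_(j < N) sqmod (psi j n).

Definition proj_kernel (n m : int) : R[i] := \sum_(j < N) (psi j n)^*%C * psi j m.

Lemma sqmod_proj_kernel_diag n : sqmod (proj_kernel n n) = density n ^+ 2.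
Proof.
rewrite /proj_kernel; under eq_bigr do rewrite mulJc_sqmod.
by rewrite -(raddf_sum (real_complex R)) sqmod_real.
Qed.

Lemma proj_kernel_energy_le n (s : seq int) : uniq s ->
  \sum_(m <- s) sqmod (proj_kernel n m) <= density n.
Proof.
move=> s_uniq; rewrite /proj_kernel.
apply: le_trans (bessel_ineq psi_on (fun j => (psi j n)^*%C) _ s_uniq) _.
by under eq_bigr do rewrite sqmodJ.
Qed.

Lemma Dz_proj_kernel n m :
  Dz (proj_kernel n) m = \sum_(j < N) (psi j n)^*%C * Dz (psi j) m.
Proof. by rewrite /Dz -sumrB; apply: eq_bigr => j _; rewrite mulrBr. Qed.

Lemma sum_density_cube_le (s : seq int) K : uniq s -> (0 < K)%N ->
  exists2 W : seq int, uniq W & \sum_(n <- s) density n ^+ 3 <=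
    \sum_(j < N) \sum_(m <- W) sqmod (Dz (psi j) m) + 2 * (size s)%:R / K%:R.
Proof.
move=> s_uniq K_gt0; set W := zball 0 (\sum_(x <- s) `|x| + K).
exists W; first exact: zwindow_uniq.
apply: (@le_trans _ _ (\sum_(n <- s)
   (\sum_(m <- W) sqmod (Dz (proj_kernel n) m) + 2 / K%:R))).
  rewrite big_seq [leRHS]big_seq; apply: ler_sum => n ns.
  apply: le_trans (peak_le_local_energy K_gt0 (proj_kernel_energy_le n)
    (sqmod_proj_kernel_diag n)) _.
  rewrite lerD2r; apply: ler_sum_subset; rewrite ?zwindow_uniq //.
  - exact: zball_subset_sum_absz.
  - by move=> m; apply: sqmod_ge0.
rewrite big_split /= big_const_seq count_predT iter_addr addr0.
rewrite -[_ *+ size s]mulr_natl mulrA.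
rewrite [_ * 2]mulrC lerD2r exchange_big [leRHS]exchange_big /=; apply: ler_sum => m _.
under eq_bigr do rewrite Dz_proj_kernel.
exact: bessel_ineq_dual.
Qed.

End DensityBound.

Lemma sum_le_esum {R : realType} {T : choiceType} (f : T -> R) (W : seq T) : uniq W ->
  ((\sum_(x <- W) f x)%:E <= \esum_(x in [set: T]) (f x)%:E)%E.
Proof.
move=> W_uniq; apply: esum_ge; exists [set` W]; first by split; [exact: finite_seq|].
by rewrite -fsbig_seq // sumEFin.
Qed.

Theorem lemma2p2 (R : realType) (N : nat) (psi : 'I_N -> int -> R[i]) :
  orthonormal_l2Z psi ->
  (\esum_(n in [set: int]) (((\sum_(j < N) sqmod (psi j n)) ^+ 3)%:E)
   <= \sum_(j < N) \esum_(n in [set: int]) ((sqmod (Dz (psi j) n))%:E))%E.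
Proof.
move=> psi_on; apply: ge_ereal_sup => _ [X [X_fin _] <-] /=.
rewrite fsbig_finite //= sumEFin.
set s := finmap.enum_fset _; have s_uniq : uniq s := finmap.fset_uniq _.
apply: (@lee_of_le_add_inv_nat _ _ (2 * (size s)%:R)) => K K_gt0.
have [W W_uniq density_le] := sum_density_cube_le psi_on _ _ s_uniq K_gt0.
apply: le_trans (_ : (\sum_(j < N) \sum_(m <- W) sqmod (Dz (psi j) m))%:E <= _)%E.
  by rewrite lee_fin lerBlDr.
rewrite -sumEFin; apply: lee_sum => j _; exact: sum_le_esum.
Qed.
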